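(* Let $\omega\in(0,1)$ be irrational and $s>0$. Then $$\limsup_{N\to+\infty}\Big(\sum_{j=0}^{k(N)}\frac{\log q_{j+1}}{q_j}-s\log N\Big)<+\infty$$ holds if and only if $$\limsup_{k\to+\infty}\Big(\sum_{j=0}^{k}\beta_{j-1}\log\omega_j^{-1}+s\log\beta_{k-1}\Big)<+\infty.$$
   Context: Continued fraction data of $\omega$: $\omega_0=\omega$, $\omega_{k+1}=\{1/\omega_k\}$ (fractional part), $a_{k+1}=\lfloor1/\omega_k\rfloor$; $\beta_{-1}=1$, $\beta_k=\prod_{j=0}^k\omega_j$ for $k\ge0$; the convergent denominators are $q_{-1}=0$, $q_0=1$, $q_{k+1}=a_{k+1}q_k+q_{k-1}$. $k(N)$ is defined by $q_{k(N)}\le N<q_{k(N)+1}$. *)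

From HB Require Import structures.
From mathcomp Require Import all_boot all_order all_algebra.
From mathcomp Require Import all_classical all_reals all_analysis.
Set Implicit Arguments. Unset Strict Implicit. Unset Printing Implicit Defensive.
Import Order.TTheory GRing.Theory Num.Theory.
Local Open Scope ring_scope.

Section CF.
Variable R : realType.

Definition frac (x : R) : R := x - (Num.floor x)%:~R.

Fixpoint omg (w : R) (k : nat) : R :=
  match k with
  | 0 => w
  | k'.+1 => frac (omg w k')^-1
  end.

(* a_{k+1} = floor (1/omega_k) ; we set a_0 := 0 (unused) *)
Definition acf (w : R) (k : nat) : R :=
  match k with
  | 0 => 0
  | k'.+1 => (Num.floor (omg w k')^-1)%:~R
  end.

(* qpair k = (q_{k-1}, q_k); q_{-1} = 0, q_0 = 1,
   q_{k+1} = a_{k+1} q_k + q_{k-1} *)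
Fixpoint qpair (w : R) (k : nat) : R * R :=
  match k with
  | 0 => (0, 1)
  | k'.+1 => let p := qpair w k' in (p.2, acf w k'.+1 * p.2 + p.1)
  end.

Definition qcf (w : R) (k : nat) : R := (qpair w k).2.

(* betam1 w k = beta_{k-1} = prod_{j=0}^{k-1} omega_j  (beta_{-1} = 1) *)
Definition betam1 (w : R) (k : nat) : R := \prod_(j < k) omg w j.

(* k(N): the index k with q_k <= N < q_{k+1}; defined as the largest k
   (k <= N) with q_k <= N.  Since q_k >= k and (q_k) is nondecreasing and
   strictly increasing from k = 1 on, for N >= 1 this is exactly the unique
   k with q_k <= N < q_{k+1}. (For N = 0 it is 0; irrelevant for limsup.) *)
Definition kN (w : R) (N : nat) : nat :=
  \max_(k < N.+1 | qcf w k <= N%:R) k.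

End CF.

From Pilot Require Import Defs.
From HB Require Import structures.
From mathcomp Require Import all_boot all_order all_algebra.
From mathcomp Require Import all_classical all_reals all_analysis.
From mathcomp Require Import lra ring.
Import Order.TTheory GRing.Theory Num.Theory.
Local Open Scope ring_scope.

(* The continued fraction determinant identity
     beta_{k-1} q_k + beta_k q_{k-1} = 1
   gives 1/2 <= beta_{k-1} q_k <= 1, i.e. log beta_{k-1} = - log q_k + O(1).
   Writing log omega_j^{-1} = log beta_{j-1} - log beta_j, each term
   beta_{j-1} log omega_j^{-1} of the second sum differs from log q_{j+1} / q_j
   by O((log q_j + 1) / q_j + (log q_{j+1} + 1) / q_{j+1}), which is summable
   since q_{j+2} >= 2 q_j.  Hence both expressions are, up to a bounded error,
   sum_{j <= k} log q_{j+1} / q_j - s log q_k; in the first one it is sampled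
   at k = k(N), where q_{k(N)} <= N, and conversely every k lies below k(N)
   for some N <= 2 q_k, which costs only s log 2. *)

Section FracIrrational.
Variable R : realType.

Lemma frac_ge0_lt1 (x : R) : 0 <= Defs.frac x < 1.
Proof.
rewrite /Defs.frac; have /andP[h1 h2] := floor_itv x.
rewrite subr_ge0 h1 /= intrD in h2 *; lra.
Qed.

Lemma irrational_frac_inv (x : R) : irrational x -> irrational (Defs.frac x^-1).
Proof.
move=> xi [q _ hq]; apply: xi; exists (q + (Num.floor x^-1)%:~R)^-1 => //.
by rewrite fmorphV rmorphD /= hq ratr_int /Defs.frac subrK invrK.
Qed.

Lemma omg_irrational (w : R) j : irrational w -> irrational (omg w j).
Proof. by move=> wi; elim: j => [|j IH] //=; exact: irrational_frac_inv. Qed.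

Lemma omg_gt0 (w : R) j : 0 < w -> irrational w -> 0 < omg w j.
Proof.
move=> w0 wi; case: j => [|j] //=.
have /andP[h0 _] := frac_ge0_lt1 (omg w j)^-1.
rewrite lt_neqAle h0 andbT eq_sym; apply/eqP=> h.
have := irrational_frac_inv _ (omg_irrational w j wi); apply.
by exists 0; rewrite ?rmorph0.
Qed.

Lemma omg_lt1 (w : R) j : w < 1 -> omg w j < 1.
Proof. by case: j => [|j] // _; have /andP[] := frac_ge0_lt1 (omg w j)^-1. Qed.

End FracIrrational.

Lemma sum_le_of_contract2 {R : realFieldType} (a : nat -> R) :
  (forall j, 0 <= a j <= 1) -> (forall j, a j.+2 <= 3 / 4 * a j) ->
  forall n, \sum_(j < n) a j <= 8.
Proof.
move=> a01 aSS n.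
suff : \sum_(j < n) a j + 4 * (a n + a n.+1) <= 8.
  by have /andP[? _] := a01 n; have /andP[? _] := a01 n.+1; lra.
elim: n => [|n IH].
  by rewrite big_ord0 add0r; have := a01 0%N; have := a01 1%N; lra.
by rewrite big_ord_recr /=; have := aSS n; lra.
Qed.

Definition ev_ubounded {R : realDomainType} (u : nat -> R) : Prop :=
  exists M : R, exists n0 : nat, forall n, (n0 <= n)%N -> u n <= M.

Lemma limn_esup_lt_pinftyE {R : realType} (u : nat -> R) :
  (limn_esup (fun n => (u n)%:E) < +oo)%E <-> ev_ubounded u.
Proof.
split.
- rewrite /limn_esup /limf_esup => /ereal_inf_lt[_ [V [n0 _ hn0] <-]] hs.
  have ub n : (n0 <= n)%N -> ((u n)%:E <= ereal_sup [set (u x)%:E | x in V])%E.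
    by move=> h; apply: ereal_sup_ubound; exists n => //; apply: hn0.
  move: hs ub; case: (ereal_sup _) => [r| |] // _ ub.
  + by exists r, n0 => n /ub; rewrite lee_fin.
  + by exists 0, n0 => n /ub.
- move=> [M [n0 h]]; rewrite /limn_esup /limf_esup.
  apply: (@le_lt_trans _ _ M%:E); last exact: ltry.
  apply: (@le_trans _ _ (ereal_sup [set (u x)%:E | x in (fun n : nat => (n0 <= n)%N)])).
    by apply: ereal_inf_lbound; exists (fun n : nat => (n0 <= n)%N) => //; exists n0.
  by apply: ge_ereal_sup => _ [n /= hn <-]; rewrite lee_fin; exact: h.
Qed.

Lemma ev_ubounded_le {R : realDomainType} (u v : nat -> R) (C : R) :
  (forall n, u n <= v n + C) -> ev_ubounded v -> ev_ubounded u.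
Proof.
move=> uv [M [n0 h]]; exists (M + C), n0 => n /h vn.
by apply: le_trans (uv n) _; rewrite lerD2r.
Qed.

Section ContinuedFraction.
Variable R : realType.
Variable w : R.
Hypotheses (w0 : 0 < w) (w1 : w < 1) (wi : irrational w).

Local Notation om := (omg w).
Local Notation q := (qcf w).
Local Notation qprev j := (qpair w j).1.
Local Notation b := (betam1 w).

Let om_gt0 j : 0 < om j. Proof. exact: omg_gt0. Qed.
Let om_lt1 j : om j < 1. Proof. exact: omg_lt1. Qed.

Lemma acf_ge1 j : 1 <= acf w j.+1.
Proof.
have h : 1 <= (om j)^-1 by rewrite invf_ge1 // ltW.
by rewrite /acf -[1 in X in X <= _]/((1:int)%:~R) ler_int floor_ge_int.
Qed.

Lemma qcfS j : q j.+1 = acf w j.+1 * q j + qprev j. Proof. by []. Qed.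
Lemma qprevS j : qprev j.+1 = q j. Proof. by []. Qed.

Lemma qpair_bounds j : 0 <= qprev j <= q j /\ 1 <= q j.
Proof.
elim: j => [|j [/andP[h1 h2] h3]]; first by rewrite /= ler01 lexx.
rewrite qprevS qcfS; have := acf_ge1 j; split; [apply/andP; split|]; nra.
Qed.

Lemma qcf_ge1 j : 1 <= q j. Proof. by case: (qpair_bounds j). Qed.
Lemma qcf_gt0 j : 0 < q j. Proof. exact: lt_le_trans ltr01 (qcf_ge1 j). Qed.
Lemma qprev_ge0 j : 0 <= qprev j. Proof. by case: (qpair_bounds j) => /andP[]. Qed.
Lemma qprev_le_qcf j : qprev j <= q j. Proof. by case: (qpair_bounds j) => /andP[]. Qed.

Lemma qcf_le_succ j : q j <= q j.+1.
Proof.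
rewrite qcfS; have := acf_ge1 j; have := qcf_ge1 j; have := qprev_ge0 j; nra.
Qed.

Lemma qcf_addS_le j : q j.+1 + q j <= q j.+2.
Proof.
rewrite [q j.+2]qcfS qprevS; have := acf_ge1 j.+1; have := qcf_ge1 j.+1; nra.
Qed.

Lemma qcf_ge_nat j : j%:R <= q j.
Proof.
suff H i : i%:R + 1 <= q i.+1.
  by case: j => [|j]; [exact: le_trans ler01 (qcf_ge1 0) | rewrite -natr1 H].
elim: i => [|i IH]; first by rewrite add0r qcf_ge1.
have := qcf_addS_le i; have := qcf_ge1 i; rewrite -natr1 in IH *; lra.
Qed.

Lemma betam1S j : b j.+1 = b j * om j.
Proof. by rewrite /betam1 big_ord_recr. Qed.

Lemma betam1_gt0 j : 0 < b j.
Proof.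
elim: j => [|j IH]; first by rewrite /betam1 big_ord0 ltr01.
by rewrite betam1S mulr_gt0.
Qed.

Lemma betam1S_le j : b j.+1 <= b j.
Proof. by rewrite betam1S ger_pMr ?betam1_gt0 // ltW. Qed.

Lemma betam1_qcf_det j : b j * q j + b j.+1 * qprev j = 1.
Proof.
elim: j => [|j IH]; first by rewrite /betam1 big_ord0 /= mul1r mulr0 addr0.
rewrite qprevS qcfS [b j.+2]betam1S betam1S /= /Defs.frac.
have omj : om j != 0 by rewrite gt_eqF.
by rewrite -IH betam1S; field.
Qed.

Lemma betam1_qcf_bounds j : 2^-1 <= b j * q j <= 1.
Proof.
have := betam1_qcf_det j; have := betam1S_le j; have := qprev_le_qcf j.
have := qprev_ge0 j; have := betam1_gt0 j.+1; have := qcf_gt0 j.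
move=> *; apply/andP; split; nra.
Qed.

Lemma ln2_le1 : ln (2 : R) <= 1.
Proof. by have := @le_ln1Dx R 1; rewrite (_ : 1 + 1 = 2) //; apply; lra. Qed.

Lemma ln_betam1_qcf_bounds j : -1 <= ln (b j * q j) <= 0.
Proof.
have /andP[h1 h2] := betam1_qcf_bounds j.
have p : 0 < b j * q j by rewrite mulr_gt0 ?betam1_gt0 ?qcf_gt0.
rewrite ln_le0 // andbT.
have : ln 2^-1 <= ln (b j * q j) by rewrite ler_ln // posrE invr_gt0; lra.
by rewrite lnV ?posrE; have := ln2_le1; lra.
Qed.

Lemma ln_omg_inv j : ln (om j)^-1 = ln (b j) - ln (b j.+1).
Proof. by rewrite lnV ?posrE // betam1S lnM ?posrE ?betam1_gt0 //; lra. Qed.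

Lemma betam1_le_inv_qcf j : b j <= (q j)^-1.
Proof.
rewrite -(ler_pM2r (qcf_gt0 j)) mulVf ?gt_eqF ?qcf_gt0 //.
have := betam1_qcf_det j; have := betam1_gt0 j.+1; have := qprev_ge0 j; nra.
Qed.

Lemma inv_qcf_sub_betam1_le j : (q j)^-1 - b j <= b j.+1.
Proof.
have qj := qcf_gt0 j.
rewrite -(ler_pM2r qj) mulrBl mulVf ?gt_eqF //.
have := betam1_qcf_det j; have := qprev_le_qcf j; have := betam1_gt0 j.+1; nra.
Qed.

Definition qcf_err j := (ln (q j) + 1) / q j.

Lemma qcf_err_ge0 j : 0 <= qcf_err j.
Proof. by rewrite divr_ge0 ?(ltW (qcf_gt0 j)) //; have := ln_ge0 (qcf_ge1 j); lra. Qed.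

Lemma term_diff_bound j :
  `|ln (q j.+1) / q j - b j * ln (om j)^-1| <= qcf_err j + qcf_err j.+1.
Proof.
have lnb k : ln (b k) = ln (b k * q k) - ln (q k).
  by rewrite lnM ?posrE ?betam1_gt0 ?qcf_gt0 //; lra.
rewrite ln_omg_inv /qcf_err !lnb.
have := ln_betam1_qcf_bounds j; have := ln_betam1_qcf_bounds j.+1.
set L0 := ln (b j * q j); set L1 := ln (b j.+1 * q j.+1).
set X := ln (q j.+1); set Y := ln (q j).
have X0 : 0 <= X by apply: ln_ge0; exact: qcf_ge1.
have Y0 : 0 <= Y by apply: ln_ge0; exact: qcf_ge1.
set u := (q j)^-1; set v := (q j.+1)^-1.
have u0 : 0 <= u by rewrite invr_ge0 ltW ?qcf_gt0.
have v0 : 0 <= v by rewrite invr_ge0 ltW ?qcf_gt0.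
set B := b j; set B1 := b j.+1.
have B0 : 0 < B by apply: betam1_gt0.
have Bu : B <= u by apply: betam1_le_inv_qcf.
have B1v : B1 <= v by apply: betam1_le_inv_qcf.
have uB : u - B <= B1 by apply: inv_qcf_sub_betam1_le.
have p1 : 0 <= (u - B) * X <= v * X.
  by rewrite mulr_ge0 ?subr_ge0 //= ler_wpM2r //; lra.
have p2 : 0 <= B * Y <= u * Y by rewrite mulr_ge0 ?(ltW B0) //= ler_wpM2r.
move=> hL1 hL0.
have p3 : `|B * (L0 - L1)| <= u.
  rewrite normrM gtr0_norm // -[X in _ <= X]mulr1.
  apply: (le_trans (ler_wpM2l (ltW B0) (_ : `|L0 - L1| <= 1))) => //.
    by rewrite ler_norml; lra.
  by rewrite ler_wpM2r.
move: p3; rewrite !ler_norml !mulrDl !mul1r [X * v]mulrC [Y * u]mulrC.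
have : X * u - B * (L0 - Y - (L1 - X)) = (u - B) * X + B * Y - B * (L0 - L1).
  by ring.
have : 0 <= v * X by rewrite mulr_ge0.
have : 0 <= u * Y by rewrite mulr_ge0.
lra.
Qed.

Lemma sqrt_qcf_ge1 j : 1 <= Num.sqrt (q j).
Proof. by rewrite -sqrtr1 ler_sqrt ?qcf_ge1 // ltW ?qcf_gt0. Qed.

(* Summability of qcf_err: it is at most 2 / sqrt q_j, and sqrt q_j grows
   geometrically along every second index. *)
Lemma qcf_err_le_inv_sqrt j : qcf_err j <= 2 * (Num.sqrt (q j))^-1.
Proof.
set r := Num.sqrt (q j); have q1 := qcf_ge1 j.
have e : r ^+ 2 = q j by rewrite sqr_sqrtr // (le_trans ler01).
have r1 : 1 <= r := sqrt_qcf_ge1 j.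
have r0 : 0 < r by lra.
have lnq : ln (q j) = 2 * ln r by rewrite -e lnXn // mulr_natl.
have := @le_ln1Dx R (r - 1); rewrite [1 + _]addrC subrK => /(_ ltac:(lra)) hl.
have -> : 2 * r^-1 = 2 * r / r ^+ 2 by rewrite expr2 invfM mulrA mulfK ?gt_eqF.
rewrite /qcf_err lnq -e ler_pM2r ?invr_gt0 ?exprn_gt0 //; lra.
Qed.

Lemma inv_sqrt_qcf_SS_le j :
  (Num.sqrt (q j.+2))^-1 <= 3 / 4 * (Num.sqrt (q j))^-1.
Proof.
have q2 : 2 * q j <= q j.+2 by have := qcf_addS_le j; have := qcf_le_succ j; lra.
have r0 : 0 < Num.sqrt (q j) by rewrite sqrtr_gt0 qcf_gt0.
have -> : 3 / 4 * (Num.sqrt (q j))^-1 = (4 / 3 * Num.sqrt (q j))^-1.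
  by field; rewrite gt_eqF.
rewrite lef_pV2 ?posrE ?sqrtr_gt0 ?qcf_gt0 ?mulr_gt0 //.
rewrite -(ler_pXn2r (_ : (0 < 2)%N)) ?nnegrE ?mulr_ge0 ?sqrtr_ge0 //.
rewrite exprMn !sqr_sqrtr ?(ltW (qcf_gt0 _)) //; have := qcf_gt0 j; lra.
Qed.

Lemma sum_qcf_err_le n : \sum_(j < n) qcf_err j <= 16.
Proof.
apply: (@le_trans _ _ (\sum_(j < n) 2 * (Num.sqrt (q j))^-1)).
  by apply: ler_sum => j _; exact: qcf_err_le_inv_sqrt.
rewrite -mulr_sumr (_ : 16 = 2 * 8); last by rewrite -natrM.
rewrite ler_pM2l //.
apply: (@sum_le_of_contract2 _ (fun j => (Num.sqrt (q j))^-1)) => [j|].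
  by rewrite invr_ge0 sqrtr_ge0 /= invf_le1 ?sqrtr_gt0 ?qcf_gt0 ?sqrt_qcf_ge1.
exact: inv_sqrt_qcf_SS_le.
Qed.

Lemma sum_term_diff_bound n :
  `|\sum_(j < n.+1) (ln (q j.+1) / q j - b j * ln (om j)^-1)| <= 32.
Proof.
apply: (le_trans (ler_norm_sum _ _ _)).
apply: (@le_trans _ _ (\sum_(j < n.+1) (qcf_err j + qcf_err j.+1))).
  by apply: ler_sum => j _; exact: term_diff_bound.
rewrite big_split /=; have := sum_qcf_err_le n.+1; have := sum_qcf_err_le n.+2.
by rewrite big_ord_recl /=; have := qcf_err_ge0 0; lra.
Qed.

Lemma qcf_kN_le N : (1 <= N)%N -> q (kN w N) <= N%:R.
Proof.
move=> N1; have : (0 < #|[pred i : 'I_N.+1 | (q i <= N%:R)%R]|)%N.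
  by apply/card_gt0P; exists ord0; rewrite inE /= /qcf /= (_ : 1 = 1%:R) // ler_nat.
by case/(eq_bigmax_cond (@nat_of_ord _)) => i0 + E; rewrite /kN E inE.
Qed.

Lemma leq_kN N k : (k <= N)%N -> q k <= N%:R -> (k <= kN w N)%N.
Proof.
by move=> kN qN; exact: (@leq_bigmax_cond _ (fun i : 'I_N.+1 => q i <= N%:R)
  (@nat_of_ord _) (Ordinal (kN : (k < N.+1)%N))).
Qed.

Variable s : R.
Hypothesis s0 : 0 < s.

Definition lnq_sum k := \sum_(j < k.+1) ln (q j.+1) / q j.
Definition crit_N (N : nat) := lnq_sum (kN w N) - s * ln N%:R.
Definition crit_q k := lnq_sum k - s * ln (q k).
Definition crit_beta k := \sum_(j < k.+1) b j * ln (om j)^-1 + s * ln (b k).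

Lemma lnq_sum_mono : {homo lnq_sum : n m / (n <= m)%N >-> n <= m}.
Proof.
apply: homo_leq => [x|y x z|k]; [exact: lexx | exact: le_trans |].
rewrite [lnq_sum k.+1]big_ord_recr /= lerDl.
by rewrite divr_ge0 ?ln_ge0 ?qcf_ge1 // ltW ?qcf_gt0.
Qed.

Lemma crit_q_crit_beta_dist k : `|crit_q k - crit_beta k| <= 32 + s.
Proof.
have -> : crit_q k - crit_beta k =
    \sum_(j < k.+1) (ln (q j.+1) / q j - b j * ln (om j)^-1) - s * ln (b k * q k).
  by rewrite /crit_q /crit_beta /lnq_sum sumrB lnM ?posrE ?betam1_gt0 ?qcf_gt0 //; ring.
have := sum_term_diff_bound k; have /andP[L1 L0] := ln_betam1_qcf_bounds k.
rewrite !ler_norml => /andP[D1 D2].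
have : 0 <= s * (ln (b k * q k) + 1) by rewrite mulr_ge0 ?(ltW s0) //; lra.
have : s * ln (b k * q k) <= 0 by rewrite mulr_ge0_le0 ?(ltW s0).
by rewrite mulrDr mulr1 => *; apply/andP; split; lra.
Qed.

Lemma crit_N_le_crit_q N : (1 <= N)%N -> crit_N N <= crit_q (kN w N).
Proof.
move=> N1; rewrite lerD2l lerN2 ler_wpM2l ?(ltW s0) // ler_ln ?posrE ?qcf_gt0 //.
- exact: qcf_kN_le.
- by rewrite ltr0n.
Qed.

(* N := floor q_k + 1 <= 2 q_k satisfies k <= k(N), and ln N <= ln q_k + ln 2. *)
Lemma crit_q_le_crit_N k :
  exists2 N, (k <= N)%N & crit_q k <= crit_N N + s.
Proof.
set N := (Num.truncn (q k)).+1; exists N.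
  by rewrite -(ler_nat R) (le_trans (qcf_ge_nat k)) // ltW ?truncnS_gt.
have qN : q k < N%:R by apply: truncnS_gt.
have Nq : N%:R <= q k + 1 by rewrite /N -natr1 lerD2r truncn_le ltW ?qcf_gt0.
have q1 := qcf_ge1 k.
have kK : (k <= kN w N)%N.
  by apply: leq_kN (ltW qN); rewrite -(ler_nat R) (le_trans (qcf_ge_nat k)) ?ltW.
have lnN : ln (N%:R : R) <= ln (q k) + 1.
  have : ln (N%:R : R) <= ln (2 * q k) by rewrite ler_ln ?posrE; lra.
  by rewrite lnM ?posrE //; have := ln2_le1; lra.
have := lnq_sum_mono _ _ kK; rewrite /crit_q /crit_N.
have : s * ln (N%:R : R) <= s * (ln (q k) + 1) by rewrite ler_wpM2l ?(ltW s0).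
by rewrite mulrDr mulr1; lra.
Qed.

Lemma ev_ubounded_crit_N_q : ev_ubounded crit_N <-> ev_ubounded crit_q.
Proof.
split=> [[M [n0 h]] | [M [k0 h]]].
- exists (M + s), n0 => k kn0; have [N kN le_qN] := crit_q_le_crit_N k.
  by rewrite (le_trans le_qN) // lerD2r h // (leq_trans kn0).
- exists M, (k0 + (Num.truncn (q k0)).+1)%N => N hN.
  have kN0 : (k0 <= N)%N by apply: leq_trans hN; rewrite leq_addr.
  have qN : q k0 <= N%:R.
    apply: le_trans (ltW (truncnS_gt (q k0))) _; rewrite ler_nat.
    by apply: leq_trans hN; rewrite leq_addl.
  have N1 : (1 <= N)%N by apply: leq_trans hN; rewrite addnS.
  exact: le_trans (crit_N_le_crit_q _ N1) (h _ (leq_kN _ _ kN0 qN)).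
Qed.

Lemma ev_ubounded_crit_q_beta : ev_ubounded crit_q <-> ev_ubounded crit_beta.
Proof.
split; apply: (@ev_ubounded_le _ _ _ (32 + s)) => n;
  by have := crit_q_crit_beta_dist n; rewrite ler_norml; lra.
Qed.

End ContinuedFraction.

Theorem mainTheorem6 (R : realType) (w s : R) :
  0 < w -> w < 1 -> irrational w -> 0 < s ->
  ((limn_esup (fun N : nat =>
      ((\sum_(j < (kN w N).+1) ln (qcf w j.+1) / qcf w j) - s * ln N%:R)%:E)
     < +oo)%E
   <->
   (limn_esup (fun k : nat =>
      ((\sum_(j < k.+1) betam1 w j * ln (omg w j)^-1) + s * ln (betam1 w k))%:E)
     < +oo)%E).
Proof.
move=> w0 w1 wi s0.
rewrite (limn_esup_lt_pinftyE (crit_N R w s)).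
rewrite (limn_esup_lt_pinftyE (crit_beta R w s)).
by apply: iff_trans; [exact: ev_ubounded_crit_N_q | exact: ev_ubounded_crit_q_beta].
Qed.
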